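(* Let $\mathcal{W}_0=\mathcal{X}-\hat{\mathcal{X}}_0$. Suppose $\{{\bf R}^{(n)}_k\}$ form an effective partition of $\mathcal{W}_0$ with respect to pessimistic restriction matrices $\{\tilde{\bf R}^{(n)}_k\}$, i.e. there is a bijection $f:[K]\to[K]$ with, for each $k\in[K]$, $$\sum_{n=1}^N \left\| \mathcal{X}|_k\times_n \left({\bf I} - {\bf Q}^{(n)}_k \right) \right\|^2\leq \sum_{n=1}^N \left\| \mathcal{W}_0 \times_n \tilde{\bf R}_{f(k)}^{(n)} \left({\bf I}-\tilde{\bf P}^{(n)} \right) \times_{1} \tilde{\bf R}_{f(k)}^{(1)} \cdots \times_{n-1} \tilde{\bf R}_{f(k)}^{(n-1)} \times_{n+1} \tilde{\bf R}_{f(k)}^{(n+1)} \cdots \times_N \tilde{\bf R}_{f(k)}^{(N)}\right\|^2 ,$$ where $\tilde{\bf P}^{(n)}$ are the rank-$\tilde r_n$ ($\tilde r_n\geq\bar r_n\geq r_n$) orthogonal projections from the truncated HoSVD of $\mathcal{W}_0$. Then $$\left\| \mathcal{W}_0 - \hat{\mathcal{X}}_1 \right\|^2 = \left\| \left( \mathcal{X} - \hat{\mathcal{X}}_0 \right) - \sum^K_{k = 1} \left( \mathcal{X} - \hat{\mathcal{X}}_0 \right) \times_1 {\bf Q}^{(1)}_k \times_2 \cdots \times_N {\bf Q}^{(N)}_k \right\|^2\leq \sum_{n=1}^N \left\| \left( \mathcal{X} - \hat{\mathcal{X}}_0 \right) \times_n \left( {\bf I}-\tilde{\bf P}^{(n)}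 \right)\right\|^2.$$
   Context: Let $\mathcal{X}\in\mathbb{R}^{I_1\times\cdots\times I_N}$, with $\times_n$ the mode-$n$ product and $\|\cdot\|$ the Frobenius tensor norm. For each $n$, ${\bf P}^{(n)}$ is the orthogonal projection onto the top $r_n$ left singular vectors of the mode-$n$ matricization ${\bf X}_{(n)}$, and $\hat{\mathcal{X}}_0=\mathcal{X}\times_1{\bf P}^{(1)}\times_2\cdots\times_N{\bf P}^{(N)}$. Index sets $J^n_{1,k}\subseteq[I_n]$, $k\in[K]$, are such that the blocks $J^1_{1,k}\times\cdots\times J^N_{1,k}$ are pairwise disjoint and cover all indices; ${\bf R}^{(n)}_k\in\{0,1\}^{I_n\times I_n}$ is diagonal with ${\bf R}^{(n)}_k(i,i)=1$ iff $i\in J^n_{1,k}$, and $\mathcal{X}|_k=\mathcal{W}_0\times_1{\bf R}^{(1)}_k\times_2\cdots\times_N{\bf R}^{(N)}_k$. ${\bf Q}^{(n)}_k$ is the orthogonal projection onto the top $r^{(n)}_k$ left singular vectors of the mode-$n$ matricization of $\mathcal{X}|_k$, and $\hat{\mathcal{X}}_1=\sum_{k=1}^K\mathcal{W}_0\times_1{\bf Q}^{(1)}_k\times_2\cdots\times_N{\bf Q}^{(N)}_k$. The pessimistic matrices $\tilde{\bf R}^{(n)}_k$ are diagonal 0/1 matrices defining another partition of $\mathcal{W}_0$ into $K$ disjoint subtensors in the same manner; $\tilde{\bf P}^{(n)}$ projects onto the top $\tilde r_n$ left singular vectors of ${\bf W}_{0,(n)}$, and $\bar r_n$ is the rank of the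 truncated HoSVD projections of $\mathcal{X}$ used for comparison. *)

From HB Require Import structures.
From mathcomp Require Import all_boot all_order all_algebra.
Unset Printing Implicit Defensive.
Import Order.TTheory GRing.Theory Num.Theory.
Local Open Scope ring_scope.

Section Tensors.
Variables (R : realFieldType) (N : nat) (I : 'I_N -> nat).

Notation idx := {dffun forall n : 'I_N, 'I_(I n)}.

Definition tensor := idx -> R.

Definition setc (i : idx) (n : 'I_N) (b : 'I_(I n)) : idx :=
  finfun (dfwith (fun m => i m) b).

Definition mode_prod (X : tensor) (n : 'I_N) (M : 'M[R]_(I n)) : tensor :=
  fun i => \sum_(b : 'I_(I n)) M (i n) b * X (setc i n b).

Definition mprod (X : tensor) (M : forall n : 'I_N, 'M[R]_(I n)) : tensor :=
  foldl (fun Y n => mode_prod Y n (M n)) X (enum 'I_N).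

Definition tsub (X Y : tensor) : tensor := fun i => X i - Y i.

Definition tnorm2 (X : tensor) : R := \sum_(i : idx) X i ^+ 2.

(* Gram matrix X_(n) X_(n)^T of the mode-n matricization X_(n):
   the columns of X_(n) are the mode-n fibres, i.e. for a fixed
   multi-index i the column (X (setc i n a))_a; summing over the
   i with i_n = a enumerates each column exactly once. *)
Definition mode_gram (X : tensor) (n : 'I_N) : 'M[R]_(I n) :=
  \matrix_(a, b) \sum_(i : idx | i n == a) X i * X (setc i n b).

End Tensors.

(* P is the orthogonal projection onto the span of the top r left singular
   vectors of a matrix A, given through its Gram matrix G = A A^T:
   the left singular vectors of A are an orthonormal eigenbasis U of A A^T
   (eigenvalues sigma_i^2), listed by non-increasing singular value, and
   P = U_r U_r^T where U_r are the first r columns of U. *)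
Definition top_lsv_proj (R : realFieldType) (m : nat) (G : 'M[R]_m) (r : nat)
    (P : 'M[R]_m) : Prop :=
  exists (U : 'M[R]_m) (d : 'I_m -> R),
    [/\ U^T *m U = 1%:M,
        G *m U = U *m diag_mx (\row_i d i),
        (forall i j : 'I_m, (i <= j)%N -> d j <= d i) &
        P = U *m pid_mx r *m U^T].

Definition restr (R : realFieldType) (m : nat) (J : {set 'I_m}) : 'M[R]_m :=
  diag_mx (\row_i (i \in J)%:R).

Definition block_partition (N : nat) (I : 'I_N -> nat) (K : nat)
    (J : forall n : 'I_N, 'I_K -> {set 'I_(I n)}) : Prop :=
  (forall i : {dffun forall n : 'I_N, 'I_(I n)}, exists k : 'I_K, forall n, i n \in J n k) /\
  (forall (i : {dffun forall n : 'I_N, 'I_(I n)}) (k k' : 'I_K),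
      (forall n, i n \in J n k) -> (forall n, i n \in J n k') -> k = k').

Arguments setc {N I} i n b.
Arguments mode_prod {R N I} X n M.
Arguments mode_gram {R N I} X n.
Arguments mprod {R N I} X M.
Arguments tsub {R N I} X Y.
Arguments tnorm2 {R N I} X.
Arguments top_lsv_proj {R m} G r P.
Arguments restr R {m} J.
Arguments block_partition {N I K} J.
Arguments tensor R {N} I.

From HB Require Import structures.
From mathcomp Require Import all_boot all_order all_algebra.
From Stdlib Require Import FunctionalExtensionality.
Import Order.TTheory GRing.Theory Num.Theory.
Local Open Scope ring_scope.

(* Every mode product is an instance of the multilinear map
   (X, M) |-> (i |-> \sum_b (\prod_n M_n (i_n, b_n)) X b), under which products
   compose modewise.  Since each Q_k^(n) lives on the support of block k,
   W0 - Xhat1 splits into the local errors X|_k - X|_k x_1 Q_k^(1) ... x_N Q_k^(N),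
   supported on disjoint blocks, so squared norms add up.  Each local error is
   bounded as in the HoSVD error analysis: peel off one orthogonal projection
   at a time by Pythagoras, the remaining projections being contractions.  The
   effective-partition hypothesis bounds the result by the restrictions of
   W0 x_n (I - Ptilde^(n)) to the blocks of the pessimistic partition, and
   summing these over k (reindexed by the bijection f) recovers
   ||W0 x_n (I - Ptilde^(n))||^2. *)

Lemma bigA_distr_bigA_dffun (R : comPzSemiRingType) (J : finType) (T_ : J -> finType)
    (F : forall j, T_ j -> R) :
  \prod_j \sum_(a : T_ j) F j a = \sum_(t : {dffun forall j, T_ j}) \prod_j F j (t j).
Proof.
pose F' j := [ffun a => F j a].
rewrite (reindex (@dffun_of_fprod _ T_)); last exact/onW_bij/dffun_of_fprod_bij.
transitivity (\sum_(t : fprod T_) \prod_(j in J) F' j (t j)); last first.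
  by apply: eq_bigr => t _; apply: eq_bigr => j _; rewrite !ffunE.
rewrite (@big_fprod R 0 1 *%R +%R _ T_ F').
rewrite -(bigA_distr_big_dep _ (fun j => untag 0 (F' j))).
apply: eq_bigr => j _.
transitivity (\sum_(a : T_ j) F' j a); first by apply: eq_bigr => a _; rewrite ffunE.
exact: (big_tag (fun j => F' j)).
Qed.

Section MultilinearProduct.
Context {R : realFieldType} {N : nat} {I : 'I_N -> nat}.
Local Notation idx := {dffun forall n : 'I_N, 'I_(I n)}.
Local Notation mxs := (forall n : 'I_N, 'M[R]_(I n)).
Local Notation tensor := (tensor R I).
Implicit Types (X Y Z : tensor) (M : mxs).

Definition tmul X M : tensor :=
  fun i => \sum_(b : idx) (\prod_n M n (i n) (b n)) * X b.

Definition mode_mx (n : 'I_N) (A : 'M[R]_(I n)) : mxs :=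
  @dfwith _ (fun m => 'M[R]_(I m)) (fun m => 1%:M) n A.

Definition tdot X Y : R := \sum_i X i * Y i.

Lemma eq_tmul X M1 M2 : (forall n, M1 n = M2 n) -> tmul X M1 = tmul X M2.
Proof. by move=> eqM; congr tmul; exact: functional_extensionality_dep. Qed.

Lemma tmulA X (A B : mxs) : tmul (tmul X B) A = tmul X (fun n => A n *m B n).
Proof.
apply: functional_extensionality => i; rewrite /tmul.
under eq_bigr do rewrite big_distrr /=.
rewrite exchange_big; apply: eq_bigr => c _.
under eq_bigr do rewrite mulrA.
rewrite -big_distrl /=; congr (_ * _).
under [RHS]eq_bigr do rewrite mxE.
by rewrite bigA_distr_bigA_dffun; apply: eq_bigr => b _; rewrite -big_split.
Qed.

Lemma tmul_diag X M i : (forall n, is_diag_mx (M n)) ->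
  tmul X M i = (\prod_n M n (i n) (i n)) * X i.
Proof.
move=> diagM; rewrite /tmul (bigD1 i) //= [s in _ + s]big1 ?addr0 // => b neq_bi.
have [n neq_n | eq_ib] := pickP (fun n => i n != b n).
  by rewrite (bigD1 n) //= (is_diag_mxP (diagM n)) ?mul0r.
by case/eqP: neq_bi; apply/ffunP => n; move/negbFE/eqP: (eq_ib n).
Qed.

Lemma tmul1 X : tmul X (fun=> 1%:M) = X.
Proof.
apply: functional_extensionality => i; rewrite tmul_diag => [|n]; last exact: scalar_mx_is_diag.
by rewrite big1 ?mul1r // => n _; rewrite mxE eqxx.
Qed.

Lemma mode_mx_id n (A : 'M[R]_(I n)) : mode_mx n A n = A.
Proof. exact: dfwith_in. Qed.

Lemma mode_mx_out n (A : 'M[R]_(I n)) m : m != n -> mode_mx n A m = 1%:M.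
Proof. by move=> neq_mn; rewrite /mode_mx dfwith_out // eq_sym. Qed.

Lemma prod_mode_mx n (A : 'M[R]_(I n)) (i b : idx) :
  \prod_m mode_mx n A m (i m) (b m) =
  A (i n) (b n) * \prod_(m | m != n) ((i m == b m)%:R : R).
Proof.
rewrite (bigD1 n) //= mode_mx_id; congr (_ * _).
by apply: eq_bigr => m neq_mn; rewrite mode_mx_out // mxE.
Qed.

Lemma mode_prodE X n A : mode_prod X n A = tmul X (mode_mx n A).
Proof.
apply: functional_extensionality => i; rewrite /mode_prod /tmul.
rewrite (partition_big (fun b : idx => b n) xpredT) //=; apply: eq_bigr => a _.
have setc_n : setc i n a n = a by rewrite ffunE dfwith_in.
have setc_out m : m != n -> setc i n a m = i m.
  by move=> neq_mn; rewrite ffunE dfwith_out // eq_sym.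
rewrite (bigD1 (setc i n a)) /=; last by rewrite setc_n.
rewrite [X in _ + X]big1 ?addr0.
  rewrite prod_mode_mx setc_n big1 ?mulr1 // => m neq_mn.
  by rewrite setc_out // eqxx.
move=> b /andP [/eqP bn_a neq_b]; rewrite prod_mode_mx.
have [m /andP [neq_mn neq_im] | eq_ib] := pickP (fun m => (m != n) && (i m != b m)).
  by rewrite (bigD1 m) //= (negbTE neq_im) !(mul0r, mulr0).
case/eqP: neq_b; apply/ffunP => m.
have [eq_mn|neq_mn] := eqVneq m n; first by rewrite eq_mn setc_n.
by rewrite setc_out //; move: (eq_ib m); rewrite neq_mn /= => /negbFE/eqP.
Qed.

Lemma mprodE X M : mprod X M = tmul X M.
Proof.
have foldl_tmul s Y : uniq s -> foldl (fun Y n => mode_prod Y n (M n)) Y s =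
                              tmul Y (fun m => if m \in s then M m else 1%:M).
  elim: s Y => [|n s IHs] Y /=; first by rewrite tmul1.
  case/andP=> n_s uniq_s; rewrite IHs // mode_prodE tmulA; apply: eq_tmul => m.
  rewrite inE; have [->|neq_mn] := eqVneq m n.
    by rewrite (negbTE n_s) mode_mx_id mul1mx.
  by rewrite mode_mx_out // mulmx1.
by rewrite /mprod foldl_tmul ?enum_uniq //; apply: eq_tmul => m; rewrite mem_enum.
Qed.

Lemma tmul0 M : tmul \0 M = \0.
Proof. by apply: functional_extensionality => i; rewrite /tmul big1 // => b _; rewrite mulr0. Qed.

Lemma tmulBl X Y M : tmul (X \- Y) M = tmul X M \- tmul Y M.
Proof.
apply: functional_extensionality => i.
by rewrite /tmul /= -sumrB; apply: eq_bigr => b _; rewrite mulrBr.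
Qed.

Lemma tmul_mode_mxB X n (A B : 'M[R]_(I n)) :
  tmul X (mode_mx n (A - B)) = tmul X (mode_mx n A) \- tmul X (mode_mx n B).
Proof.
apply: functional_extensionality => i; rewrite /tmul /= -sumrB.
by apply: eq_bigr => b _; rewrite !prod_mode_mx !mxE -!mulrBl.
Qed.

Lemma tmul_mode_mx1 X n : tmul X (mode_mx n 1%:M) = X.
Proof.
rewrite -[RHS]tmul1; apply: eq_tmul => m.
by have [->|neq_mn] := eqVneq m n; [rewrite mode_mx_id | rewrite mode_mx_out].
Qed.

Lemma tmul_mode_mx0 X n : tmul X (mode_mx n 0) = \0.
Proof.
apply: functional_extensionality => i; rewrite /tmul big1 // => b _.
by rewrite prod_mode_mx mxE !mul0r.
Qed.

Lemma tmul_mode_mxC X m n (A : 'M[R]_(I m)) (B : 'M[R]_(I n)) : m != n ->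
  tmul (tmul X (mode_mx m A)) (mode_mx n B) = tmul (tmul X (mode_mx n B)) (mode_mx m A).
Proof.
move=> neq_mn; rewrite !tmulA; apply: eq_tmul => j.
have [->|neq_jm] := eqVneq j m; first by rewrite mode_mx_id mode_mx_out // mulmx1 mul1mx.
have [->|neq_jn] := eqVneq j n; first by rewrite mode_mx_id mode_mx_out 1?eq_sym // mulmx1 mul1mx.
by rewrite !mode_mx_out.
Qed.

Lemma tmul_mode_mx_factor X n M (B : 'M[R]_(I n)) :
  tmul (tmul X (mode_mx n (M n *m B))) (fun m => if m == n then 1%:M else M m) =
  tmul (tmul X (mode_mx n B)) M.
Proof.
rewrite !tmulA; apply: eq_tmul => m.
have [->|neq_mn] := eqVneq m n; first by rewrite !mode_mx_id mul1mx.
by rewrite !mode_mx_out // !mulmx1.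
Qed.

Lemma tdot_tmull X Y M : tdot (tmul X M) Y = tdot X (tmul Y (fun n => (M n)^T)).
Proof.
rewrite /tdot /tmul; under eq_bigr do rewrite big_distrl /=.
rewrite exchange_big; apply: eq_bigr => b _; rewrite big_distrr /=.
apply: eq_bigr => i _; under [in RHS]eq_bigr do rewrite mxE.
by rewrite -mulrA mulrCA.
Qed.

Lemma tdot_mode_mx_eq0 X Y n (A B : 'M[R]_(I n)) : A^T *m B = 0 ->
  tdot (tmul X (mode_mx n A)) (tmul Y (mode_mx n B)) = 0.
Proof.
move=> AtB0; rewrite tdot_tmull tmulA.
rewrite (eq_tmul _ _ (mode_mx n (A^T *m B))) ?AtB0 ?tmul_mode_mx0 => [|m].
  by rewrite /tdot big1 // => i _; rewrite mulr0.
have [->|neq_mn] := eqVneq m n; first by rewrite !mode_mx_id.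
by rewrite !mode_mx_out // trmx1 mulmx1.
Qed.

Lemma tnorm2_ge0 X : 0 <= tnorm2 X.
Proof. by apply: sumr_ge0 => i _; rewrite sqr_ge0. Qed.

Lemma tnorm2D X Y : tdot X Y = 0 -> tnorm2 (X \+ Y) = tnorm2 X + tnorm2 Y.
Proof.
rewrite /tdot /tnorm2 => XY0; under eq_bigr do rewrite /= sqrrD.
by rewrite !big_split /= XY0 addr0 addr0.
Qed.

Definition orthoproj {m} (P : 'M[R]_m) := P^T = P /\ P *m P = P.

Lemma top_lsv_proj_orthoproj m (G P : 'M[R]_m) r : top_lsv_proj G r P -> orthoproj P.
Proof.
case=> U [d [orthoU _ _ ->]]; split; first by rewrite !trmx_mul trmxK tr_pid_mx mulmxA.
rewrite !mulmxA -(mulmxA (U *m pid_mx r) U^T U) orthoU mulmx1.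
by rewrite -(mulmxA U) mul_pid_mx minnn pid_mx_minv.
Qed.

Lemma orthoproj_restr_mulmx m (J : {set 'I_m}) (P : 'M[R]_m) :
  orthoproj P -> restr R J *m P = P -> P *m restr R J = P.
Proof.
case=> symP _ RP; rewrite -[LHS]trmxK trmx_mul symP.
by rewrite /restr tr_diag_mx -/(restr R J) RP symP.
Qed.

Lemma tnorm2_mode_split X n (P : 'M[R]_(I n)) : orthoproj P ->
  tnorm2 X = tnorm2 (tmul X (mode_mx n P)) + tnorm2 (tmul X (mode_mx n (1%:M - P))).
Proof.
case=> symP idemP; rewrite -tnorm2D; last first.
  by apply: tdot_mode_mx_eq0; rewrite symP mulmxBr mulmx1 idemP subrr.
rewrite tmul_mode_mxB tmul_mode_mx1; congr tnorm2.
by apply: functional_extensionality => i; rewrite /= addrC subrK.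
Qed.

Lemma tnorm2_mode_proj_le X n (P : 'M[R]_(I n)) : orthoproj P ->
  tnorm2 (tmul X (mode_mx n P)) <= tnorm2 X.
Proof. by move=> projP; rewrite [leRHS](tnorm2_mode_split X _ _ projP) lerDl tnorm2_ge0. Qed.

Section ErrorBound.
Variables (Q : mxs) (projQ : forall n, orthoproj (Q n)).

Definition proj_modes (s : seq 'I_N) : mxs := fun m => if m \in s then Q m else 1%:M.

Lemma tmul_proj_modes_cons X n s (A : 'M[R]_(I n)) : n \notin s ->
  tmul (tmul X (proj_modes (n :: s))) (mode_mx n A) =
  tmul (tmul X (mode_mx n (A *m Q n))) (proj_modes s).
Proof.
move=> n_s; rewrite !tmulA; apply: eq_tmul => m; rewrite /proj_modes inE.
have [->|neq_mn] := eqVneq m n; first by rewrite (negbTE n_s) !mode_mx_id mul1mx.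
by rewrite !mode_mx_out // mul1mx mulmx1.
Qed.

Lemma tnorm2_sub_proj_modes s X : uniq s ->
  tnorm2 (X \- tmul X (proj_modes s)) <=
  \sum_(n <- s) tnorm2 (tmul X (mode_mx n (1%:M - Q n))).
Proof.
elim: s X => [|n s IHs] X /=.
  rewrite big_nil (eq_tmul _ _ (fun=> 1%:M)) // tmul1 /tnorm2 big1 // => i _.
  by rewrite /= subrr expr2 mul0r.
case/andP=> n_s uniq_s; have [symQ idemQ] := projQ n.
set E := X \- _; set Z := tmul X (mode_mx n (Q n)).
have E_1Q : tmul E (mode_mx n (1%:M - Q n)) = tmul X (mode_mx n (1%:M - Q n)).
  rewrite tmulBl tmul_proj_modes_cons // mulmxBl mul1mx idemQ subrr tmul_mode_mx0 tmul0.
  by apply: functional_extensionality => i; rewrite /= subr0.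
have E_Q : tmul E (mode_mx n (Q n)) = Z \- tmul Z (proj_modes s).
  by rewrite tmulBl tmul_proj_modes_cons // idemQ.
rewrite big_cons (tnorm2_mode_split E _ _ (projQ n)) E_1Q E_Q addrC lerD2l.
apply: le_trans (IHs _ uniq_s) _; rewrite !big_seq; apply: ler_sum => m m_s.
rewrite /Z tmul_mode_mxC ?tnorm2_mode_proj_le //.
by apply: contraNneq n_s => ->.
Qed.

Lemma hosvd_error_bound X :
  tnorm2 (X \- tmul X Q) <= \sum_n tnorm2 (tmul X (mode_mx n (1%:M - Q n))).
Proof.
rewrite (eq_tmul _ Q (proj_modes (enum 'I_N))) => [|n]; last by rewrite /proj_modes mem_enum.
by rewrite -big_enum; exact: tnorm2_sub_proj_modes (enum_uniq _).
Qed.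

End ErrorBound.

Section Blocks.
Context {K : nat}.
Variable J : forall n : 'I_N, 'I_K -> {set 'I_(I n)}.

Definition in_block k (i : idx) := [forall n, i n \in J n k].

Lemma tmul_restr X k i : tmul X (fun n => restr R (J n k)) i = (in_block k i)%:R * X i.
Proof.
rewrite tmul_diag => [|n]; last exact: diag_mx_is_diag.
congr (_ * _); under eq_bigr do rewrite !mxE eqxx mulr1n.
have [/forallP i_k | /forallPn [n i_n]] := boolP (in_block k i).
  by rewrite big1 // => n _; rewrite i_k.
by rewrite (bigD1 n) //= (negbTE i_n) mul0r.
Qed.

Hypothesis partJ : block_partition J.

Lemma block_partitionP i : exists k0, forall k, in_block k i = (k == k0).
Proof.
case: partJ => cover disj; have [k0 i_k0] := cover i; exists k0 => k.
by apply/forallP/eqP => [i_k | ->] //; exact: disj i_k i_k0.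
Qed.

Lemma tnorm2_sum_blocks (D : 'I_K -> tensor) :
  (forall k i, ~~ in_block k i -> D k i = 0) ->
  tnorm2 (fun i => \sum_k D k i) = \sum_k tnorm2 (D k).
Proof.
move=> suppD; rewrite /tnorm2 exchange_big; apply: eq_bigr => i _ /=.
have [k0 blk] := block_partitionP i.
have D0 k : k != k0 -> D k i = 0 by move=> neq_k; apply: suppD; rewrite blk.
rewrite (bigD1 k0) //= big1 ?addr0 => [|k /D0 //].
by rewrite [RHS](bigD1 k0) //= big1 ?addr0 // => k /D0 ->; rewrite expr2 mul0r.
Qed.

Lemma sum_tmul_restr X i : \sum_k tmul X (fun n => restr R (J n k)) i = X i.
Proof.
have [k0 blk] := block_partitionP i.
under eq_bigr do rewrite tmul_restr blk.
by rewrite (bigD1 k0) //= eqxx mul1r big1 ?addr0 // => k /negbTE ->; rewrite mul0r.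
Qed.

Lemma tnorm2_restr_blocks X : \sum_k tnorm2 (tmul X (fun n => restr R (J n k))) = tnorm2 X.
Proof.
rewrite -tnorm2_sum_blocks => [|k i]; last by rewrite tmul_restr => /negbTE ->; rewrite mul0r.
by congr tnorm2; apply: functional_extensionality => i; rewrite sum_tmul_restr.
Qed.

End Blocks.

End MultilinearProduct.

Arguments top_lsv_proj_orthoproj {R m G P r}.
Arguments orthoproj_restr_mulmx {R m J P}.
Arguments hosvd_error_bound {R N I Q}.
Arguments tnorm2_sum_blocks {R N I K J}.
Arguments sum_tmul_restr {R N I K J}.
Arguments tnorm2_restr_blocks {R N I K J}.

Theorem lemma3 (R : realFieldType) (N : nat) (I : 'I_N -> nat) (K : nat)
  (X : tensor R I)
  (* truncated HoSVD of X: ranks r_n, projections P^(n) *)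
  (r rbar rt : 'I_N -> nat)
  (P : forall n : 'I_N, 'M[R]_(I n))
  (HP : forall n, top_lsv_proj (mode_gram X n) (r n) (P n))
  (* optimistic partition J^n_{1,k} and local projections Q^(n)_k *)
  (J : forall n : 'I_N, 'I_K -> {set 'I_(I n)})
  (HJ : block_partition J)
  (rk : forall n : 'I_N, 'I_K -> nat)
  (Q : forall n : 'I_N, 'I_K -> 'M[R]_(I n))
  (* pessimistic partition and projections Ptilde^(n) of W0 *)
  (Jt : forall n : 'I_N, 'I_K -> {set 'I_(I n)})
  (HJt : block_partition Jt)
  (Pt : forall n : 'I_N, 'M[R]_(I n))
  (f : 'I_K -> 'I_K) :
  let Xhat0 := mprod X P in
  let W0 := tsub X Xhat0 in
  let Rm := fun n k => restr R (J n k) in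
  let Rt := fun n k => restr R (Jt n k) in
  let Xk := fun k => mprod W0 (fun n => Rm n k) in
  let Xhat1 := fun i => \sum_(k < K) mprod W0 (fun n => Q n k) i in
  (forall n k, top_lsv_proj (mode_gram (Xk k) n) (rk n k) (Q n k)) ->
  (* the top singular vectors of the subtensor X|_k live on its support *)
  (forall n k, Rm n k *m Q n k = Q n k) ->
  (forall n, top_lsv_proj (mode_gram W0 n) (rt n) (Pt n)) ->
  (forall n, (rbar n <= rt n)%N /\ (r n <= rbar n)%N) ->
  bijective f ->
  (forall k : 'I_K,
     \sum_(n < N) tnorm2 (mode_prod (Xk k) n (1%:M - Q n k))
     <= \sum_(n < N) tnorm2
          (mprod (mode_prod W0 n (Rt n (f k) *m (1%:M - Pt n)))
                 (fun m => if m == n then 1%:M else Rt m (f k)))) ->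
  tnorm2 (tsub W0 Xhat1) <= \sum_(n < N) tnorm2 (mode_prod W0 n (1%:M - Pt n)).
Proof.
move=> Xhat0 W0 Rm Rt Xk Xhat1 lsvQ suppQ _ _ bij_f effective.
have projQ n k : orthoproj (Q n k) := top_lsv_proj_orthoproj (lsvQ n k).
have XkE k : Xk k = tmul W0 (Rm^~ k) by rewrite /Xk mprodE.
pose D k := Xk k \- tmul W0 (Q^~ k).
have D_local k : D k = Xk k \- tmul (Xk k) (Q^~ k).
  rewrite /D XkE tmulA; congr (_ \- _); apply: eq_tmul => n.
  by rewrite (orthoproj_restr_mulmx (projQ n k) (suppQ n k)).
have D_restr k : D k = tmul (W0 \- tmul W0 (Q^~ k)) (Rm^~ k).
  by rewrite /D XkE tmulBl tmulA; congr (_ \- _); apply: eq_tmul => n; rewrite suppQ.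
have W0_sub_Xhat1 : tsub W0 Xhat1 = fun i => \sum_k D k i.
  apply: functional_extensionality => i; rewrite /tsub /Xhat1 /= sumrB.
  rewrite -{1}(sum_tmul_restr HJ W0 i); congr (_ - _); apply: eq_bigr => k _.
    by rewrite XkE.
  by rewrite mprodE.
rewrite W0_sub_Xhat1 (tnorm2_sum_blocks HJ) => [|k i]; last first.
  by rewrite D_restr tmul_restr => /negbTE ->; rewrite mul0r.
have D_bound k : tnorm2 (D k) <= \sum_n tnorm2 (mode_prod (Xk k) n (1%:M - Q n k)).
  by rewrite D_local; under eq_bigr do rewrite mode_prodE; exact: hosvd_error_bound.
apply: le_trans (ler_sum _ (fun k _ => le_trans (D_bound k) (effective k))) _.
rewrite exchange_big /=; apply: ler_sum => n _.
rewrite -[leRHS](tnorm2_restr_blocks HJt) [leRHS](reindex_inj (bij_inj bij_f)).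
apply: ler_sum => k _; rewrite mprodE !mode_prodE.
by rewrite (tmul_mode_mx_factor _ _ (Rt^~ (f k))).
Qed.
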